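(* In the principal–agent contract design model described in the context, the principal's utility function $u^p:\mathcal{F}\to\mathbb{R}$ can be written as $u^p=g+h$, where $g$ is a concave function on $\mathcal{F}$ and $h$ is a piecewise constant function on $\mathcal{F}$.
   Context: There are $n$ agent actions $a_1,\dots,a_n$ with costs $c(a_i)\in\mathbb{R}$, and $m$ outcomes $o\in\{1,\dots,m\}$ with principal values $v_o\in\mathbb{R}$. Taking action $a_i$ induces a probability distribution $p(\cdot\mid a_i)$ over outcomes. A contract is a vector ${\bm f}\in\mathcal{F}=\mathbb{R}^m_{\ge 0}$, where $f_o$ is the payment to the agent on outcome $o$. Given ${\bm f}$, the agent takes an action $a^*({\bm f})$ maximizing $\mathbb{E}_{o\sim p(\cdot\mid a)}[f_o]-c(a)$ (ties broken in favor of the principal); the agent's utility is $u^a({\bm f})=\max_i\big(\mathbb{E}_{o\sim p(\cdot\mid a_i)}[f_o]-c(a_i)\big)$ and the principal's utility is $u^p({\bm f})=\mathbb{E}_{o\sim p(\cdot\mid a^*({\bm f}))}[v_o-f_o]$. A function is piecewise constant if $\mathcal{F}$ can be partitioned into finitely many pieces on each of which it is constant. *)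

From mathcomp Require Import all_boot all_order all_algebra.
Set Implicit Arguments. Unset Strict Implicit. Unset Printing Implicit Defensive.
Import Order.TTheory GRing.Theory Num.Theory.
Local Open Scope ring_scope.

(* Principal–agent model: actions are indexed by 'I_n.+1 (at least one action),
   outcomes by 'I_m.  c : action costs, v : principal values,
   p i o = probability of outcome o under action i. *)

Section Model.
Variables (R : realFieldType) (n m : nat).
Variables (c : 'I_n.+1 -> R) (v : 'I_m -> R) (p : 'I_n.+1 -> 'I_m -> R).

Definition is_distribution : Prop :=
  forall i, (forall o, 0 <= p i o) /\ \sum_(o < m) p i o = 1.

Definition contract_space (f : 'I_m -> R) : Prop := forall o, 0 <= f o.

Definition agent_util_of (f : 'I_m -> R) (i : 'I_n.+1) : R :=
  \sum_(o < m) p i o * f o - c i.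

Definition princ_util_of (f : 'I_m -> R) (i : 'I_n.+1) : R :=
  \sum_(o < m) p i o * (v o - f o).

Definition agent_best0 (f : 'I_m -> R) : 'I_n.+1 :=
  Order.arg_max ord0 predT (agent_util_of f).

Definition agent_util (f : 'I_m -> R) : R := agent_util_of f (agent_best0 f).

Definition best_response (f : 'I_m -> R) : 'I_n.+1 :=
  Order.arg_max (agent_best0 f)
    (fun i => agent_util_of f i == agent_util f) (princ_util_of f).

Definition princ_util (f : 'I_m -> R) : R := princ_util_of f (best_response f).

End Model.

Definition concave_on_contracts (R : realFieldType) (m : nat)
  (g : ('I_m -> R) -> R) : Prop :=
  forall (f1 f2 : 'I_m -> R) (t : R),
    contract_space f1 -> contract_space f2 -> 0 <= t -> t <= 1 ->
    t * g f1 + (1 - t) * g f2 <= g (fun o => t * f1 o + (1 - t) * f2 o).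

(* h is piecewise constant on F: F can be partitioned into finitely many
   pieces (the fibres of piece : F -> 'I_k) on each of which h is constant *)
Definition piecewise_constant_on_contracts (R : realFieldType) (m : nat)
  (h : ('I_m -> R) -> R) : Prop :=
  exists (k : nat) (piece : ('I_m -> R) -> 'I_k),
    forall f1 f2 : 'I_m -> R, contract_space f1 -> contract_space f2 ->
      piece f1 = piece f2 -> h f1 = h f2.

(* Writing a := a*(f), the principal's utility is
     u^p(f) = (E_a[v] - c(a)) - (E_a[f] - c(a)) = W(a*(f)) - u^a(f),
   where W(a) = E_a[v] - c(a) is the welfare of action a.  The agent's
   utility u^a is a maximum of finitely many affine functions of f, hence
   convex, so g := -u^a is concave; h := W o a* takes at most n + 1 values
   and is constant on each fibre of a*. *)

From mathcomp Require Import all_boot all_order all_algebra.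
From mathcomp Require Import ring.
Set Implicit Arguments. Unset Strict Implicit. Unset Printing Implicit Defensive.
Import Order.TTheory GRing.Theory Num.Theory.
Local Open Scope ring_scope.

Section AgentPrincipal.
Variables (R : realFieldType) (n m : nat).
Variables (c : 'I_n.+1 -> R) (v : 'I_m -> R) (p : 'I_n.+1 -> 'I_m -> R).

Definition welfare_of (i : 'I_n.+1) : R := \sum_(o < m) p i o * v o - c i.

Lemma agent_util_of_affine (f1 f2 : 'I_m -> R) (t : R) (i : 'I_n.+1) :
  agent_util_of c p (fun o => t * f1 o + (1 - t) * f2 o) i =
  t * agent_util_of c p f1 i + (1 - t) * agent_util_of c p f2 i.
Proof.
rewrite /agent_util_of.
have -> : \sum_(o < m) p i o * (t * f1 o + (1 - t) * f2 o) =
    t * \sum_(o < m) p i o * f1 o + (1 - t) * \sum_(o < m) p i o * f2 o.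
  by rewrite !mulr_sumr -big_split /=; apply: eq_bigr => o _; ring.
ring.
Qed.

Lemma agent_util_of_le (f : 'I_m -> R) (i : 'I_n.+1) :
  agent_util_of c p f i <= agent_util c p f.
Proof. by rewrite /agent_util /agent_best0; case: arg_maxP => // j _; apply. Qed.

Lemma agent_util_best_response (f : 'I_m -> R) :
  agent_util_of c p f (best_response c v p f) = agent_util c p f.
Proof. by rewrite /best_response; case: arg_maxP => // j /eqP. Qed.

Lemma agent_util_convex (f1 f2 : 'I_m -> R) (t : R) : 0 <= t -> t <= 1 ->
  agent_util c p (fun o => t * f1 o + (1 - t) * f2 o) <=
  t * agent_util c p f1 + (1 - t) * agent_util c p f2.
Proof.
move=> t_ge0 t_le1.
rewrite {1}/agent_util agent_util_of_affine.
by rewrite lerD // ler_wpM2l ?subr_ge0 // agent_util_of_le.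
Qed.

Lemma princ_util_ofE (f : 'I_m -> R) (i : 'I_n.+1) :
  princ_util_of v p f i = welfare_of i - agent_util_of c p f i.
Proof.
rewrite /princ_util_of /welfare_of /agent_util_of.
under eq_bigr do rewrite mulrBr.
rewrite sumrB; ring.
Qed.

Lemma princ_utilE (f : 'I_m -> R) :
  princ_util c v p f = welfare_of (best_response c v p f) - agent_util c p f.
Proof. by rewrite /princ_util princ_util_ofE agent_util_best_response. Qed.

End AgentPrincipal.

Theorem lemma4 (R : realFieldType) (n m : nat)
  (c : 'I_n.+1 -> R) (v : 'I_m -> R) (p : 'I_n.+1 -> 'I_m -> R) :
  is_distribution p ->
  exists (g h : ('I_m -> R) -> R),
    concave_on_contracts g /\ piecewise_constant_on_contracts h /\
    forall f : 'I_m -> R, contract_space f ->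
      princ_util c v p f = g f + h f.
Proof.
move=> _.
exists (fun f => - agent_util c p f).
exists (fun f => welfare_of c v p (best_response c v p f)).
split; [|split].
- move=> f1 f2 t _ _ t_ge0 t_le1.
  by rewrite !mulrN -opprD lerN2 agent_util_convex.
- by exists n.+1, (best_response c v p) => f1 f2 _ _ ->.
- by move=> f _; rewrite princ_utilE addrC.
Qed.
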